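(* Suppose a checkpoint $C$ of epoch $e$ is finalized on chain $c$, and a checkpoint $C'$ of epoch $e'>e$ is justified on chain $c'$. Then $c$ and $c'$ have a common prefix up to epoch $e$, i.e. the block of $C$ is an ancestor of (or equal to) the blocks of $c'$ at epochs $\ge e$.
   Context: System: $n$ validators, each with equal stake, of which $f<n/3$ are Byzantine; the validator set is fixed between finalized checkpoints. Blocks form a tree rooted at the genesis block, and a chain is a path from the genesis block. A checkpoint is a pair $(b,e)$, where $b$ is the block of the first slot of epoch $e$ on the chain. A checkpoint vote is a signed pair, source $(a,e_a)$ and target $(b,e_b)$, with $e_a<e_b$. A supermajority link $(a,e_a)\to(b,e_b)$ exists when more than $2/3$ of the validators cast that checkpoint vote. A checkpoint is justified if it is the target of a supermajority link; the genesis checkpoint is justified. A checkpoint $(a,e_a)$ is finalized if: - it is justified; - there is a supermajority link $(a,e_a)\to(b,e_b)$ with $e_b-e_a\le 2$; - if $e_b-e_a=2$, the checkpoint at epoch $e_a+1$ on that chain is justified. Honest validators follow these rules: - each casts at most one checkpoint vote per epoch; - the source is the justified checkpoint with the highest epoch in its view; - the target is the current epoch's checkpoint on the candidate chain, selected by a fork choice rule that only follows chains extending the block of that highest justified checkpoint. *)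

From mathcomp Require Import all_boot.
Set Implicit Arguments. Unset Strict Implicit. Unset Printing Implicit Defensive.

(* Blocks form a tree rooted at [genesis] via [parent]; a chain is a path from
   genesis, identified with its tip block.  Each block has a slot; an epoch
   consists of [L] slots, epoch [e] starting at slot [e * L]. *)

Definition ancestor (Block : Type) (parent : Block -> Block) (a b : Block) : Prop :=
  exists k : nat, iter k parent b = a.

Definition block_tree (Block : Type) (genesis : Block) (parent : Block -> Block)
    (slot : Block -> nat) : Prop :=
  [/\ parent genesis = genesis,
      slot genesis = 0,
      (forall b, b <> genesis -> slot (parent b) < slot b)
    & (forall b, ancestor parent genesis b)].

(* [cp_block slot L c e b]: b is the block of the (first slot of) epoch e on
   chain c, i.e. the latest block of c whose slot is <= e * L.  Hence
   (b, e) is the epoch-e checkpoint on chain c. *)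
Definition cp_block (Block : Type) (parent : Block -> Block) (slot : Block -> nat)
    (L : nat) (c : Block) (e : nat) (b : Block) : Prop :=
  [/\ ancestor parent b c,
      slot b <= e * L
    & forall x, ancestor parent x c -> slot x <= e * L -> slot x <= slot b].

(* Checkpoints are pairs (block, epoch).  A set of checkpoint votes is given by
   a boolean predicate [vs v s t] : validator v (among 'I_n) cast the vote with
   source s and target t. *)

Definition link (Block : Type) (n : nat)
    (vs : 'I_n -> Block * nat -> Block * nat -> bool) (s t : Block * nat) : Prop :=
  2 * n < 3 * #|[set v : 'I_n | vs v s t]|.

Definition justified (Block : Type) (genesis : Block) (n : nat)
    (vs : 'I_n -> Block * nat -> Block * nat -> bool) (C : Block * nat) : Prop :=
  C = (genesis, 0) \/ exists s, link vs s C.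

Definition finalized (Block : Type) (genesis : Block) (parent : Block -> Block)
    (slot : Block -> nat) (L n : nat)
    (vs : 'I_n -> Block * nat -> Block * nat -> bool) (a : Block) (ea : nat) : Prop :=
  justified genesis vs (a, ea) /\
  exists (b : Block) (eb : nat),
    [/\ link vs (a, ea) (b, eb),
        eb - ea <= 2
      & eb - ea = 2 ->
        exists m, cp_block parent slot L b ea.+1 m /\ justified genesis vs (m, ea.+1)].

(* [view v x] is the set of votes validator v knows when voting in epoch x.
   Views contain only votes that were actually cast (votes are signed) and
   grow with time. *)
Definition views_sound (Block : Type) (n : nat)
    (vs : 'I_n -> Block * nat -> Block * nat -> bool)
    (view : 'I_n -> nat -> 'I_n -> Block * nat -> Block * nat -> bool) : Prop :=
  forall v x w s t, view v x w s t -> vs w s t.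

Definition views_monotone (Block : Type) (n : nat)
    (view : 'I_n -> nat -> 'I_n -> Block * nat -> Block * nat -> bool) : Prop :=
  forall v x y w s t, x <= y -> view v x w s t -> view v y w s t.

Definition votes_well_formed (Block : Type) (n : nat)
    (vs : 'I_n -> Block * nat -> Block * nat -> bool) : Prop :=
  forall v s t, vs v s t -> s.2 < t.2.

(* An honest validator v casts its epoch-x vote in epoch x (the target is the
   current epoch's checkpoint), so the target epoch is the epoch of casting. *)

Definition honest_one_vote (Block : Type) (n : nat) (honest : {set 'I_n})
    (vs : 'I_n -> Block * nat -> Block * nat -> bool) : Prop :=
  forall v, v \in honest -> forall s t s' t',
    vs v s t -> vs v s' t' -> t.2 = t'.2 -> s = s' /\ t = t'.

Definition honest_source (Block : Type) (genesis : Block) (n : nat)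
    (honest : {set 'I_n})
    (vs : 'I_n -> Block * nat -> Block * nat -> bool)
    (view : 'I_n -> nat -> 'I_n -> Block * nat -> Block * nat -> bool) : Prop :=
  forall v, v \in honest -> forall s t, vs v s t ->
    justified genesis (view v t.2) s /\
    (forall s', justified genesis (view v t.2) s' -> s'.2 <= s.2).

Definition honest_target (Block : Type) (parent : Block -> Block)
    (slot : Block -> nat) (L n : nat) (honest : {set 'I_n})
    (vs : 'I_n -> Block * nat -> Block * nat -> bool) : Prop :=
  forall v, v \in honest -> forall s t, vs v s t ->
    exists ch : Block, ancestor parent s.1 ch /\ cp_block parent slot L ch t.2 t.1.

From mathcomp Require Import all_boot zify.
From Stdlib Require Import Classical.

Set Implicit Arguments.
Unset Strict Implicit.
Unset Printing Implicit Defensive.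

(* Justification propagates along honest votes: by induction on the epoch of
   a justified checkpoint x beyond e, the supermajority link into x shares an
   honest voter w with the finalizing link out of (a, e).  Since w saw (a, e)
   justified before voting for x, its source has epoch at least e, and by
   uniqueness of justified checkpoints per epoch (two supermajorities overlap
   in an honest validator) that source is either (a, e) itself or, by
   induction, a descendant of a.  The honest target x then lies on a chain
   through a, past the slot of a, hence descends from a.  The epoch e + 1
   skipped by a two-epoch finalizing link is covered by the justified
   checkpoint at e + 1 that finalization requires. *)

Section BlockTree.

Variables (Block : Type) (genesis : Block) (parent : Block -> Block).

Lemma ancestor_refl x : ancestor parent x x.
Proof. by exists 0. Qed.

Lemma ancestor_trans x y z :
  ancestor parent x y -> ancestor parent y z -> ancestor parent x z.
Proof. by move=> [i <-] [j <-]; exists (i + j); rewrite iterD. Qed.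

Lemma ancestor_total x y z :
  ancestor parent x z -> ancestor parent y z ->
  ancestor parent x y \/ ancestor parent y x.
Proof.
move=> [i <-] [j <-]; case: (leqP i j) => [le_ij | lt_ji].
  by right; exists (j - i); rewrite -iterD subnK.
by left; exists (i - j); rewrite -iterD subnK // ltnW.
Qed.

Variables (slot : Block -> nat) (L : nat).
Hypothesis tree : block_tree genesis parent slot.

Lemma slot_iter_parent k z :
  slot (iter k parent z) <= slot z /\
  (iter k parent z <> z -> slot (iter k parent z) < slot z).
Proof.
case: tree => parent_genesis _ slot_parent _.
elim: k => [|k [le_k lt_k]] /=; first by split.
have [at_genesis | ne_genesis] := classic (iter k parent z = genesis).
  by rewrite at_genesis parent_genesis -at_genesis.
by have := slot_parent _ ne_genesis; split => [|_]; lia.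
Qed.

Lemma ancestor_slot_eq x y :
  ancestor parent y x -> slot x <= slot y -> y = x.
Proof.
move=> [k <-] le_slot; apply: NNPP => ne.
by have [_ /(_ ne)] := slot_iter_parent k x; lia.
Qed.

Lemma ancestor_slot_le a y c :
  ancestor parent a c -> ancestor parent y c -> slot a <= slot y ->
  ancestor parent a y.
Proof.
move=> ac yc le_slot; case: (ancestor_total ac yc) => // ya.
by rewrite (ancestor_slot_eq ya le_slot); apply: ancestor_refl.
Qed.

Lemma ancestor_cp_block a ch ex x :
  ancestor parent a ch -> slot a <= ex * L -> cp_block parent slot L ch ex x ->
  ancestor parent a x.
Proof.
move=> a_ch slot_a [x_ch _ x_max].
exact: ancestor_slot_le a_ch x_ch (x_max a a_ch slot_a).
Qed.

End BlockTree.

Section Votes.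

Variables (Block : Type) (genesis : Block) (n : nat) (honest : {set 'I_n}).
Variable votes : 'I_n -> Block * nat -> Block * nat -> bool.
Hypothesis few_byzantine : 3 * #|~: honest| < n.

Lemma links_share_honest_voter s1 t1 s2 t2 :
  link votes s1 t1 -> link votes s2 t2 ->
  exists2 w, w \in honest & votes w s1 t1 && votes w s2 t2.
Proof.
rewrite /link => l1 l2.
set A := [set v | votes v s1 t1] in l1; set C := [set v | votes v s2 t2] in l2.
have cardUI := cardsUI A C.
have card_AC : #|A :|: C| <= n by rewrite -[X in _ <= X]card_ord max_card.
have cardID := cardsID (~: honest) (A :&: C).
have card_byz : #|A :&: C :&: ~: honest| <= #|~: honest|.
  by apply/subset_leq_card/subsetIr.
have : 0 < #|(A :&: C) :\: ~: honest|.
  move: few_byzantine l1 l2 cardUI card_AC cardID card_byz.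
  move: #|~: honest| #|A| #|C| #|A :|: C| #|A :&: C| #|A :&: C :&: ~: honest|.
  by move: #|A :&: C :\: ~: honest| => *; lia.
rewrite card_gt0 => /set0Pn [w]; rewrite !inE negbK => /andP [hw /andP [v1 v2]].
by exists w; rewrite ?v1 ?v2.
Qed.

Lemma justified_mono (votes' : 'I_n -> Block * nat -> Block * nat -> bool) C :
  (forall w s t, votes w s t -> votes' w s t) ->
  justified genesis votes C -> justified genesis votes' C.
Proof.
move=> sub [-> | [s l]]; [by left | right; exists s].
apply: leq_trans l _; rewrite leq_mul2l /=.
by apply/subset_leq_card/subsetP => w; rewrite !inE; apply: sub.
Qed.

Hypothesis well_formed : votes_well_formed votes.
Hypothesis one_vote : honest_one_vote honest votes.

Lemma link_epoch_lt s t : link votes s t -> s.2 < t.2.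
Proof. by move=> l; have [w _ /andP [/well_formed]] := links_share_honest_voter l l. Qed.

Lemma justified_epoch_unique p q E :
  justified genesis votes (p, E) -> justified genesis votes (q, E) -> p = q.
Proof.
move=> [[p_gen E0] | [s1 l1]] [[q_gen E0'] | [s2 l2]].
- by rewrite p_gen q_gen.
- by have := link_epoch_lt l2; rewrite /= E0.
- by have := link_epoch_lt l1; rewrite /= E0'.
- have [w hw /andP [v1 v2]] := links_share_honest_voter l1 l2.
  by have [_ [->]] := one_vote hw v1 v2 erefl.
Qed.

End Votes.

Section Casper.

Variables (Block : Type) (genesis : Block) (parent : Block -> Block).
Variables (slot : Block -> nat) (L n : nat) (honest : {set 'I_n}).
Variable votes : 'I_n -> Block * nat -> Block * nat -> bool.
Variable view : 'I_n -> nat -> 'I_n -> Block * nat -> Block * nat -> bool.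

Hypothesis tree : block_tree genesis parent slot.
Hypothesis few_byzantine : 3 * #|~: honest| < n.
Hypothesis well_formed : votes_well_formed votes.
Hypothesis sound : views_sound votes view.
Hypothesis monotone : views_monotone view.
Hypothesis one_vote : honest_one_vote honest votes.
Hypothesis source : honest_source genesis honest votes view.
Hypothesis target : honest_target parent slot L honest votes.

Lemma honest_source_justified v s t :
  v \in honest -> votes v s t -> justified genesis votes s.
Proof.
move=> hv vst; have [just_view _] := source hv vst.
by apply: justified_mono just_view => w s' t'; apply: sound.
Qed.

Lemma honest_source_epoch_mono v s1 t1 s2 t2 :
  v \in honest -> votes v s1 t1 -> votes v s2 t2 -> t1.2 <= t2.2 ->
  s1.2 <= s2.2.
Proof.
move=> hv v1 v2 le_t; have [just1 _] := source hv v1; have [_ max2] := source hv v2.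
by apply/max2/(justified_mono _ just1) => w s t; apply: monotone.
Qed.

Lemma honest_target_ancestor v s t a :
  v \in honest -> votes v s t -> ancestor parent a s.1 -> slot a <= t.2 * L ->
  ancestor parent a t.1.
Proof.
move=> hv vst a_s slot_a; have [ch [s_ch cp_t]] := target hv vst.
exact: (ancestor_cp_block tree (ancestor_trans a_s s_ch) slot_a cp_t).
Qed.

Variables (a : Block) (e : nat).
Hypothesis slot_a : slot a <= e * L.
Hypothesis finalized_a : finalized genesis parent slot L votes a e.

Let slot_a_le ex : e <= ex -> slot a <= ex * L.
Proof. by move=> le_e; apply: leq_trans slot_a (leq_mul le_e _). Qed.

Lemma finalized_ancestor_justified ex x :
  e < ex -> justified genesis votes (x, ex) -> ancestor parent a x.
Proof.
have [just_a [b [eb [link_ab span_ab mid_ab]]]] := finalized_a.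
have lt_e_eb : e < eb := link_epoch_lt few_byzantine well_formed link_ab.
have a_b : ancestor parent a b.
  have [w hw /andP [vw _]] := links_share_honest_voter few_byzantine link_ab link_ab.
  exact: honest_target_ancestor hw vw (ancestor_refl _ _) (slot_a_le (ltnW lt_e_eb)).
have unique := justified_epoch_unique (genesis := genesis) few_byzantine well_formed one_vote.
elim/ltn_ind: ex x => ex IH x lt_e_ex just_x.
have [[_ ex0] | [[s1 s2] link_sx]] := just_x; first by lia.
case: (ltngtP ex eb) => [lt_ex_eb | lt_eb_ex | eq_ex_eb].
- have span2 : eb - e = 2 by lia.
  have ex_e1 : ex = e.+1 by lia.
  have [m [cp_m just_m]] := mid_ab span2.
  rewrite ex_e1 in just_x; rewrite (unique _ _ _ just_x just_m).
  exact: (ancestor_cp_block tree a_b (slot_a_le (leqnSn e)) cp_m).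
- have [w hw /andP [v_ab v_sx]] := links_share_honest_voter few_byzantine link_ab link_sx.
  have le_e_s : e <= s2 := honest_source_epoch_mono hw v_ab v_sx (ltnW lt_eb_ex).
  have just_s := honest_source_justified hw v_sx.
  have a_s : ancestor parent a s1.
    move: le_e_s; rewrite leq_eqVlt => /orP [/eqP eq_e_s | lt_e_s].
      by rewrite -eq_e_s in just_s; rewrite (unique _ _ _ just_s just_a); apply: ancestor_refl.
    exact: IH s2 (link_epoch_lt few_byzantine well_formed link_sx) s1 lt_e_s just_s.
  exact: honest_target_ancestor hw v_sx a_s (slot_a_le (ltnW lt_e_ex)).
- have just_b : justified genesis votes (b, eb) by right; exists (a, e).
  by rewrite eq_ex_eb in just_x; rewrite (unique _ _ _ just_x just_b).
Qed.

End Casper.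

Theorem lemma2
  (Block : Type) (genesis : Block) (parent : Block -> Block) (slot : Block -> nat)
  (L : nat) (n : nat) (honest : {set 'I_n})
  (votes : 'I_n -> Block * nat -> Block * nat -> bool)
  (view : 'I_n -> nat -> 'I_n -> Block * nat -> Block * nat -> bool)
  (c c' a b' : Block) (e e' : nat) :
  block_tree genesis parent slot ->
  0 < L ->
  3 * #|~: honest| < n ->
  votes_well_formed votes ->
  views_sound votes view ->
  views_monotone view ->
  honest_one_vote honest votes ->
  honest_source genesis honest votes view ->
  honest_target parent slot L honest votes ->
  (* C = (a, e) is finalized on chain c *)
  cp_block parent slot L c e a ->
  finalized genesis parent slot L votes a e ->
  (* C' = (b', e') is justified on chain c', with e' > e *)
  e < e' ->
  cp_block parent slot L c' e' b' ->
  justified genesis votes (b', e') ->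
  (* the block of C is an ancestor of the blocks of c' at epochs >= e *)
  (forall x y, e <= x -> cp_block parent slot L c' x y -> ancestor parent a y) /\
  (forall y, ancestor parent y c' -> e * L <= slot y -> ancestor parent a y).
Proof.
move=> tree _ few_byz wf sound mono one_vote source target [_ slot_a _] fin
  lt_e_e' [b'_c' _ _] just_b'.
have a_b' : ancestor parent a b'.
  exact: (finalized_ancestor_justified tree few_byz wf sound mono one_vote
            source target slot_a fin lt_e_e' just_b').
have a_c' := ancestor_trans a_b' b'_c'.
split=> [x y le_e_x cp_y | y y_c' slot_y].
- exact: (ancestor_cp_block tree a_c' (leq_trans slot_a (leq_mul le_e_x _)) cp_y).
- exact: (ancestor_slot_le tree a_c' y_c' (leq_trans slot_a slot_y)).
Qed.
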